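(* Let $d\ge 1$ and let $X$ be a minimal $\mathbb{Z}^d$-subshift of finite type. Then $\overline{D}_h(X)\le d-1$.
   Context: A subshift of $\mathcal A^{\mathbb Z^d}$ ($\mathcal A$ finite) is a closed shift-invariant set; it is of finite type if it is the set of configurations avoiding a finite set of forbidden patterns. $X$ is minimal if every pattern appearing in some configuration of $X$ appears in every configuration of $X$. $N_n(X)$ is the number of patterns on support $\llbracket 1,n\rrbracket^d$ appearing in $X$, and the upper entropy dimension is $\overline D_h(X)=\limsup_n \frac{\log_2\log_2 N_n(X)}{\log_2 n}$. *)

From HB Require Import structures.
From mathcomp Require Import all_boot all_order all_algebra.
From Stdlib Require Import Reals ClassicalDescription.

Set Implicit Arguments. Unset Strict Implicit. Unset Printing Implicit Defensive.

Definition pos (d : nat) := {ffun 'I_d -> int}.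
Definition padd d (u v : pos d) : pos d := [ffun i => GRing.add (u i) (v i)].

Definition config (A : finType) (d : nat) := pos d -> A.

Record pattern (A : finType) (d : nat) := Pattern {
  psupp : seq (pos d);
  psym : pos d -> A }.

Definition appears A d (P : pattern A d) (x : config A d) : Prop :=
  exists v : pos d, forall u, u \in psupp P -> x (padd u v) = psym P u.

Definition is_SFT A d (X : config A d -> Prop) : Prop :=
  exists F : seq (pattern A d),
    forall x, X x <-> (forall P, List.In P F -> ~ appears P x).

Definition minimal A d (X : config A d -> Prop) : Prop :=
  forall P : pattern A d, (exists x, X x /\ appears P x) ->
    forall y, X y -> appears P y.

Definition asb (P : Prop) : bool :=
  if excluded_middle_informative P then true else false.

(* the box [[1,n]]^d, indexed by {ffun 'I_d -> 'I_n} (coordinate b i + 1) *)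
Definition box (d n : nat) := {ffun 'I_d -> 'I_n}.
Definition box_emb d n (b : box d n) : pos d := [ffun i => Posz (b i).+1].

Definition Npat A d (X : config A d -> Prop) (n : nat) : nat :=
  #|[set p : {ffun box d n -> A} |
      asb (exists x, X x /\ exists v : pos d,
             forall b : box d n, x (padd (box_emb b) v) = p b)]|.

Definition log2 (x : R) : R := (ln x / ln 2)%R.

Definition limsup_le (u : nat -> R) (L : R) : Prop :=
  forall eps : R, (0 < eps)%R -> exists N : nat, forall n : nat,
    (N <= n)%N -> (u n <= L + eps)%R.

Definition upper_entropy_dim_le A d (X : config A d -> Prop) (D : R) : Prop :=
  limsup_le (fun n => (log2 (log2 (INR (Npat X n))) / log2 (INR n))%R) D.

(* Let every forbidden pattern of the SFT X have support in the ball of radius K.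
   In a minimal X, a pattern of X on the cube [[1,n]]^d is determined by its restriction
   to the boundary layer of width 2K.  Otherwise take x1, x2 in X agreeing on the layer
   and differing in the cube, with x1 < x2 at the lexicographically first difference.
   In any configuration of X, a copy of the cube pattern of x1 can be overwritten by
   that of x2 without creating a forbidden pattern, and this increases the configuration
   lexicographically.  Hence a lexicographically maximal configuration of X among those
   equal to x1 far away avoids the cube pattern of x1 on a ball of radius N, for every N;
   by compactness some configuration of X avoids it altogether, contradicting minimality.
   So N_n(X) <= |A|^(4dK n^(d-1)), i.e. log log N_n(X) <= (d-1) log n + O(1). *)

From mathcomp Require Import all_boot all_order all_algebra.
From Stdlib Require Import Reals Lra Classical ClassicalEpsilon FunctionalExtensionality.
From mathcomp Require Import zify.

Set Implicit Arguments. Unset Strict Implicit. Unset Printing Implicit Defensive.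
Import Order.TTheory GRing.Theory Num.Theory.

Section Lattice.
Variable d : nat.
Local Open Scope ring_scope.
Implicit Types (u v w : pos d) (m : nat).

Definition psub u v : pos d := [ffun i => u i - v i].
Definition pzero : pos d := [ffun=> 0].

Lemma paddE u v i : padd u v i = u i + v i. Proof. by rewrite ffunE. Qed.
Lemma psubE u v i : psub u v i = u i - v i. Proof. by rewrite ffunE. Qed.

Lemma psubK u v : padd (psub u v) v = u.
Proof. by apply/ffunP=> i; rewrite paddE psubE subrK. Qed.

Lemma paddK u v : psub (padd u v) v = u.
Proof. by apply/ffunP=> i; rewrite psubE paddE addrK. Qed.

Lemma paddA u v w : padd (padd u v) w = padd u (padd v w).
Proof. by apply/ffunP=> i; rewrite !paddE addrA. Qed.

Lemma padd0 u : padd u pzero = u.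
Proof. by apply/ffunP=> i; rewrite paddE ffunE addr0. Qed.

Definition ltlex u v : Prop :=
  exists i : 'I_d, u i < v i /\ forall j : 'I_d, (j < i)%nat -> u j = v j.

Lemma ltlex_irr u : ~ ltlex u u.
Proof. by case=> i [+ _]; rewrite ltxx. Qed.

Lemma ltlex_trans u v w : ltlex u v -> ltlex v w -> ltlex u w.
Proof.
case=> i [lt_i eq_i] [j [lt_j eq_j]].
case: (ltngtP i j) => [ij|ji|/val_inj ij]; last first.
- by subst j; exists i; split=> [|k ki]; [exact: lt_trans lt_j | rewrite eq_i ?eq_j].
- exists j; split=> [|k kj]; first by rewrite eq_i.
  by rewrite eq_i ?eq_j //; exact: ltn_trans ji.
- exists i; split=> [|k ki]; first by rewrite -eq_j.
  by rewrite eq_i ?eq_j //; exact: ltn_trans ij.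
Qed.

Lemma ltlex_total u v : u <> v -> ltlex u v \/ ltlex v u.
Proof.
move=> neq_uv.
have [i0 neq_i0] : exists i0 : 'I_d, u i0 != v i0.
  apply/existsP; apply: contraT; rewrite negb_exists => /forallP eq_uv.
  by case: neq_uv; apply/ffunP=> i; apply/eqP; move/negPn: (eq_uv i).
case: (@arg_minnP _ i0 (fun i => u i != v i) (@nat_of_ord d) neq_i0) => i neq_i min_i.
have eq_lt : forall j : 'I_d, (j < i)%nat -> u j = v j.
  by move=> j; apply: contraTeq => /min_i; rewrite leqNgt.
case: (ltgtP (u i) (v i)) => [lt_i|gt_i|eq_i]; last by rewrite eq_i eqxx in neq_i.
- by left; exists i.
- by right; exists i; split=> // j /eq_lt.
Qed.

Lemma ltlex_add2r u v w : ltlex (padd u w) (padd v w) <-> ltlex u v.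
Proof.
split=> -[i [lt_i eq_i]]; exists i; split.
- by move: lt_i; rewrite !paddE ltrD2r.
- by move=> j /eq_i; rewrite !paddE => /addIr.
- by rewrite !paddE ltrD2r.
- by move=> j /eq_i; rewrite !paddE => ->.
Qed.

Definition inbox m u : bool := [forall i, (absz (u i) <= m)%nat].

Lemma inbox_le m m' u : (m <= m')%nat -> inbox m u -> inbox m' u.
Proof. by move=> le_m /forallP in_m; apply/forallP=> i; exact: leq_trans (in_m i) le_m. Qed.

Definition pnorm u : nat := \max_(i : 'I_d) absz (u i).

Lemma inbox_pnorm u : inbox (pnorm u) u.
Proof. by apply/forallP=> i; exact: leq_bigmax. Qed.

Definition ball_seq m : seq (pos d) :=
  [seq [ffun i => Posz (t i) - Posz m] | t : {ffun 'I_d -> 'I_(m + m).+1}].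

Lemma mem_ball_seq m u : inbox m u -> u \in ball_seq m.
Proof.
move/forallP=> in_m; apply/imageP; exists [ffun i => inord (absz (u i + Posz m))] => //.
have recenter (a : int) : (absz a <= m)%nat -> a = Posz (absz (a + Posz m)) - Posz m.
  by lia.
apply/ffunP=> i; have le_m := in_m i; rewrite !ffunE inordK; [exact: recenter | lia].
Qed.

Lemma exists_inbox_seq (s : seq (pos d)) : exists m, forall u, u \in s -> inbox m u.
Proof.
elim: s => [|a s [m in_m]]; first by exists 0%nat.
exists (maxn m (pnorm a)) => u; rewrite inE => /predU1P[->|/in_m].
- exact/inbox_le/inbox_pnorm/leq_maxr.
- exact/inbox_le/leq_maxl.
Qed.

End Lattice.

Section StrictOrder.
Variables (T : eqType) (lt : T -> T -> Prop).
Hypotheses (lt_irr : forall t, ~ lt t t)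
  (lt_trans : forall a b c, lt a b -> lt b c -> lt a c).

Lemma seq_minimal (P : T -> Prop) (s : seq T) :
  (exists2 t, t \in s & P t) ->
  exists t, [/\ t \in s, P t & forall t', t' \in s -> P t' -> ~ lt t' t].
Proof.
elim: s => [[]//|a s IH] ex_as.
have [/IH[m [m_s Pm min_m]]|no_s] := classic (exists2 t, t \in s & P t).
  have [[Pa lt_am]|not_lt_am] := classic (P a /\ lt a m).
    exists a; split=> [||t']; rewrite ?inE ?eqxx //.
    case/predU1P=> [-> _|t_s Pt lt_ta]; first exact: lt_irr.
    exact: min_m t_s Pt (lt_trans lt_ta lt_am).
  exists m; split=> [||t']; rewrite ?inE ?m_s ?orbT //.
  by case/predU1P=> [-> Pa lt_am|]; [apply: not_lt_am | exact: min_m].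
have Pa : P a.
  by case: ex_as => t; rewrite inE => /predU1P[->//|t_s Pt]; case: no_s; exists t.
exists a; split=> [||t']; rewrite ?inE ?eqxx //.
case/predU1P=> [->|t_s Pt]; first by move=> _; apply: lt_irr.
by case: no_s; exists t'.
Qed.

End StrictOrder.

Lemma fin_maximal (T : finType) (lt : T -> T -> Prop) (P : T -> Prop) :
  (forall t, ~ lt t t) -> (forall a b c, lt a b -> lt b c -> lt a c) ->
  (exists t, P t) -> exists t, P t /\ forall t', P t' -> ~ lt t t'.
Proof.
move=> lt_irr lt_trans [t Pt].
have flip_trans a b c : lt b a -> lt c b -> lt c a by move=> ba cb; exact: lt_trans cb ba.
have [|m [_ Pm max_m]] := seq_minimal lt_irr flip_trans (s := enum T) (P := P).
  by exists t; rewrite ?mem_enum.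
by exists m; split=> // t' Pt'; apply: max_m; rewrite ?mem_enum.
Qed.

Definition occurs_at A d (P : pattern A d) (x : config A d) (v : pos d) : Prop :=
  forall u, u \in psupp P -> x (padd u v) = psym P u.

Section Compactness.
Variables (A : finType) (d : nat) (F : seq (pattern A d)).

Definition admissible_on (N : nat) (y : config A d) : Prop :=
  forall Q v, List.In Q F -> inbox N v -> ~ occurs_at Q y v.

Definition extendable (R : pred (pos d)) (p : config A d) : Prop :=
  forall N, exists2 y, admissible_on N y & forall u, R u -> y u = p u.

(* Pigeonhole over the finitely many ways of filling R'. *)
Lemma extendable_step (R R' : pred (pos d)) (s : seq (pos d)) p :
  (forall u, R' u -> u \in s) -> extendable R p ->
  exists p', extendable R' p' /\ forall u, R u -> p' u = p u.
Proof.
move=> R's ext_p; apply: NNPP => no_ext.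
pose glue (q : (size s).-tuple A) u := if R' u then nth (p u) q (index u s) else p u.
have bad q : exists N, forall y, admissible_on N y ->
    (forall u, R' u -> y u = glue q u) -> ~ (forall u, R u -> glue q u = p u).
  apply: NNPP => all_N; apply: no_ext; exists (glue q); split=> [N|].
    apply: NNPP => no_y; apply: all_N; exists N => y adm agree _.
    by apply: no_y; exists y.
  apply: NNPP => agree_p; apply: all_N; exists 0%nat => y _ _; exact: agree_p.
pose Nq q := sval (constructive_indefinite_description _ (bad q)).
have Nq_bad q := svalP (constructive_indefinite_description _ (bad q)).
have [y adm_y agree_y] := ext_p (\max_q Nq q).
pose q0 := map_tuple y (in_tuple s).
have glue_q0 u : R' u -> glue q0 u = y u.
  move=> R'u; rewrite /glue R'u /= (nth_map u) ?index_mem ?R's //.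
  by rewrite nth_index ?R's.
apply: (Nq_bad q0 y).
- move=> Q v inF in_v; apply: adm_y inF _.
  exact: inbox_le (leq_bigmax (F := Nq) q0) in_v.
- by move=> u /glue_q0.
- move=> u Ru; rewrite -agree_y //; case R'u: (R' u); first exact: glue_q0.
  by rewrite /glue R'u agree_y.
Qed.

Variables (p0 : config A d) (ext_p0 : extendable pred0 p0).

Definition extend_to m R p (ext_p : extendable R p) :
    {p' | extendable (inbox m) p' /\ forall u, R u -> p' u = p u} :=
  constructive_indefinite_description _ (extendable_step (@mem_ball_seq d m) ext_p).

Fixpoint chain m : {p | extendable (inbox m) p} :=
  match m with
  | 0 => let: exist p h := extend_to 0 ext_p0 in exist _ p (proj1 h)
  | m'.+1 => let: exist p ext_p := chain m' in
             let: exist p' h := extend_to m'.+1 ext_p in exist _ p' (proj1 h)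
  end.

Lemma chain_agree m m' u : (m <= m')%nat -> inbox m u ->
  sval (chain m') u = sval (chain m) u.
Proof.
elim: m' => [|m' IH]; first by rewrite leqn0 => /eqP ->.
rewrite leq_eqVlt => /predU1P[-> //|lt_m in_m] /=.
case: (chain m') IH => p ext_p /= IH; case: (extend_to _ _) => p' [_ agree] /=.
by rewrite agree ?IH //; exact: inbox_le in_m.
Qed.

Definition chain_limit : config A d := fun u => sval (chain (pnorm u)) u.

Lemma chain_limitE m u : inbox m u -> chain_limit u = sval (chain m) u.
Proof.
move=> in_m; rewrite /chain_limit -(@chain_agree (pnorm u) (maxn m (pnorm u))).
- by rewrite (@chain_agree m) ?leq_maxl.
- exact: leq_maxr.
- exact: inbox_pnorm.
Qed.

Lemma chain_limit_avoids Q : List.In Q F -> ~ appears Q chain_limit.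
Proof.
move=> inF [v occ].
have [m in_m] := exists_inbox_seq [seq padd u v | u <- psupp Q].
have [y adm_y agree_y] := svalP (chain m) (pnorm v).
apply: (adm_y Q v inF (inbox_pnorm v)) => u u_Q.
by rewrite agree_y -?chain_limitE ?occ // in_m //; apply: map_f.
Qed.

End Compactness.

Lemma sft_compactness A d (F : seq (pattern A d)) :
  (forall N, exists y, admissible_on F N y) ->
  exists y, forall Q, List.In Q F -> ~ appears Q y.
Proof.
move=> adm; have [y0 _] := adm 0%nat.
have ext_y0 : extendable F pred0 y0 by move=> N; have [y ?] := adm N; exists y.
by exists (chain_limit ext_y0); exact: chain_limit_avoids.
Qed.

Lemma sft_support_bound A d (F : seq (pattern A d)) :
  exists K, forall Q, List.In Q F -> forall u, u \in psupp Q -> inbox K u.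
Proof.
elim: F => [|Q F [K in_K]]; first by exists 0%nat.
have [m in_m] := exists_inbox_seq (psupp Q).
exists (maxn K m) => Q' /= [<-|inF] u u_Q.
- exact/inbox_le/in_m/u_Q/leq_maxr.
- exact/inbox_le/in_K/u_Q/inF/leq_maxl.
Qed.

Section SFT.
Variables (A : finType) (d : nat) (X : config A d -> Prop) (F : seq (pattern A d)).
Hypothesis X_F : forall x, X x <-> (forall Q, List.In Q F -> ~ appears Q x).

Lemma sft_shift x v : X x -> X (fun u => x (padd u v)).
Proof.
move=> /X_F Xx; apply/X_F => Q inF [w occ]; apply: (Xx Q inF).
by exists (padd w v) => u u_Q; rewrite -paddA occ.
Qed.

Lemma minimal_sft_unavoidable (P : pattern A d) x : minimal X -> X x -> appears P x ->
  ~ (forall N, exists2 y, X y & forall v, inbox N v -> ~ occurs_at P y v).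
Proof.
move=> minX Xx P_x avoid.
have [|y avoid_y] := @sft_compactness _ _ (P :: F).
  move=> N; have [y /X_F Xy avoid_y] := avoid N; exists y.
  move=> Q v /= [<-|inF] in_v; first exact: avoid_y.
  by move=> occ; apply: (Xy Q inF); exists v.
have Xy : X y by apply/X_F => Q inF; apply: avoid_y; right.
by apply: (avoid_y P (or_introl erefl)); apply: minX Xy; exists x.
Qed.

End SFT.

Definition ltconf A d (z z' : config A d) : Prop :=
  exists c, (enum_rank (z c) < enum_rank (z' c))%nat /\
            forall c', ltlex c' c -> z c' = z' c'.

Lemma ltconf_irr A d (z : config A d) : ~ ltconf z z.
Proof. by case=> c [+ _]; rewrite ltnn. Qed.

Lemma ltconf_trans A d (z1 z2 z3 : config A d) :
  ltconf z1 z2 -> ltconf z2 z3 -> ltconf z1 z3.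
Proof.
case=> c1 [lt1 eq1] [c2 [lt2 eq2]].
have [eq_c|/eqP neq_c] := eqVneq c1 c2.
  subst c2; by exists c1; split=> [|c' lt_c]; [exact: ltn_trans lt2 | rewrite eq1 ?eq2].
case: (ltlex_total neq_c) => lt_c.
- exists c1; split=> [|c' lt_c']; first by rewrite -(eq2 c1 lt_c).
  by rewrite eq1 // eq2 //; exact: ltlex_trans lt_c' lt_c.
- exists c2; split=> [|c' lt_c']; first by rewrite (eq1 c2 lt_c).
  by rewrite eq1 ?eq2 //; exact: ltlex_trans lt_c' lt_c.
Qed.

Lemma exists_ltconf_max A d (Q : config A d -> Prop) (x0 : config A d) (M : nat) :
  Q x0 -> (forall y, Q y -> forall u, ~~ inbox M u -> y u = x0 u) ->
  exists y, Q y /\ forall y', Q y' -> ~ ltconf y y'.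
Proof.
move=> Qx0 Q_out; pose s := ball_seq d M.
pose glue (q : (size s).-tuple A) u := if inbox M u then nth (x0 u) q (index u s) else x0 u.
have glueK y : Q y -> glue (map_tuple y (in_tuple s)) = y.
  move=> Qy; apply: functional_extensionality => u; rewrite /glue.
  case: ifPn => [in_M|out]; last by rewrite Q_out.
  by rewrite /= (nth_map u) ?nth_index ?index_mem ?mem_ball_seq.
have [|q [Qq max_q]] := @fin_maximal _ (fun q q' => ltconf (glue q) (glue q'))
    (fun q => Q (glue q)) (fun q => @ltconf_irr _ _ _) (fun a b c => @ltconf_trans _ _ _ _ _).
  by exists (map_tuple x0 (in_tuple s)); rewrite glueK.
exists (glue q); split=> // y' Qy'; rewrite -(glueK y' Qy'); apply: max_q.
by rewrite glueK.
Qed.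

Section Cube.
Variables (d n : nat).
Local Open Scope ring_scope.
Implicit Type u : pos d.

Definition in_cube u : bool := [forall i, (1 <= u i) && (u i <= Posz n)].
Definition in_core (k : nat) u : bool :=
  [forall i, (Posz k < u i) && (u i <= Posz n - Posz k)].

Lemma in_cube_inbox u : in_cube u -> inbox n u.
Proof. by move/forallP=> in_u; apply/forallP=> i; move: (in_u i); lia. Qed.

Lemma in_cube_emb (b : box d n) : in_cube (box_emb b).
Proof. by apply/forallP=> i; rewrite ffunE; have := ltn_ord (b i); lia. Qed.

Lemma in_cubeP u : in_cube u -> exists b : box d n, u = box_emb b.
Proof.
move/forallP=> in_u.
have lt_n i : ((absz (u i)).-1 < n)%nat by move: (in_u i); lia.
exists [ffun i => Ordinal (lt_n i)]; apply/ffunP=> i; rewrite !ffunE /=.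
have pred_absz (a : int) : 1 <= a -> a = Posz (absz a).-1.+1 by lia.
by apply: pred_absz; case/andP: (in_u i).
Qed.

Lemma in_core_emb k (b : box d n) :
  in_core k (box_emb b) = [forall i, (k <= b i)%nat && (b i + k < n)%nat].
Proof. by apply: eq_forallb => i; rewrite ffunE; lia. Qed.

End Cube.

Lemma card_ord_le_size n (S : {set 'I_n}) (s : seq nat) :
  (forall j : 'I_n, j \in S -> (j : nat) \in s) -> (#|S| <= size s)%nat.
Proof.
move=> S_s; rewrite cardE -(size_map (@nat_of_ord n)).
apply: uniq_leq_size => [|_ /mapP[j j_S ->]]; last by apply: S_s; rewrite -mem_enum.
by rewrite (map_inj_uniq (@ord_inj n)) enum_uniq.
Qed.

Lemma card_box_coord d n (i : 'I_d) (S : {set 'I_n}) :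
  #|[set b : box d n | b i \in S]| = (#|S| * expn n d.-1)%nat.
Proof.
pose F (j : 'I_d) : pred 'I_n := if j == i then (fun a => a \in S) else predT.
have -> : #|[set b : box d n | b i \in S]| = #|finfun.family F|.
  apply: eq_card => b; rewrite inE; apply/idP/familyP => [b_S j|/(_ i)].
    by rewrite /F; case: eqP => [->|].
  by rewrite /F eqxx.
rewrite card_family foldrE big_map big_enum (bigD1 i) //= /F eqxx.
congr (_ * _)%nat; rewrite (eq_bigr (fun=> n)) => [|j /negPf ->]; last first.
  by rewrite /= card_ord.
by rewrite prod_nat_const cardC1 card_ord.
Qed.

Lemma card_box_not_core d n k :
  (#|[set b : box d n | ~~ in_core n k (box_emb b)]| <= d * (k.*2 * expn n d.-1))%nat.
Proof.
pose S := [set j : 'I_n | ~~ ((k <= j) && (j + k < n))%nat].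
have card_S : (#|S| <= k.*2)%nat.
  apply: (@leq_trans (size (iota 0 k ++ iota (n - k) k))).
    apply: card_ord_le_size => j; rewrite inE mem_cat !mem_iota; have := ltn_ord j; lia.
  by rewrite size_cat !size_iota addnn.
have out_S (b : box d n) : ~~ in_core n k (box_emb b) -> exists i, b i \in S.
  by rewrite in_core_emb negb_forall => /existsP[i out_i]; exists i; rewrite inE.
apply: (@leq_trans (\sum_(b : box d n) \sum_(i : 'I_d) nat_of_bool (b i \in S))).
  rewrite -sum1dep_card big_mkcond /=; apply: leq_sum => b _.
  case: ifPn => // /out_S[i S_i]; by rewrite (bigD1 i) //= S_i.
rewrite exchange_big /= -[X in (X * _)%nat]card_ord -sum_nat_const.
apply: leq_sum => i _.
have -> : (\sum_(b : box d n) nat_of_bool (b i \in S) = #|[set b : box d n | b i \in S]|)%nat.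
  by rewrite -sum1dep_card [RHS]big_mkcond; apply: eq_bigr => b _; case: (_ \in _).
by rewrite card_box_coord leq_mul2r card_S orbT.
Qed.

Lemma asbP (P : Prop) : reflect P (asb P).
Proof. by rewrite /asb; case: ClassicalDescription.excluded_middle_informative; constructor. Qed.

Section Rigidity.
Variables (A : finType) (d : nat) (X : config A d -> Prop) (F : seq (pattern A d)).
Hypothesis X_F : forall x, X x <-> (forall Q, List.In Q F -> ~ appears Q x).
Variable K : nat.
Hypothesis F_K : forall Q, List.In Q F -> forall u, u \in psupp Q -> inbox K u.
Hypothesis minX : minimal X.
Variable n : nat.

Definition cube_pattern (x : config A d) : pattern A d :=
  Pattern (filter (in_cube n) (ball_seq d n)) x.

Lemma occurs_cube_pattern x y v :
  occurs_at (cube_pattern x) y v <-> forall u, in_cube n u -> y (padd u v) = x u.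
Proof.
split=> occ u; last by rewrite mem_filter => /andP[/occ].
by move=> u_C; apply: occ; rewrite mem_filter u_C mem_ball_seq ?in_cube_inbox.
Qed.

Definition patch (y x : config A d) (v : pos d) : config A d :=
  fun u => if in_cube n (psub u v) then x (psub u v) else y u.

(* A forbidden occurrence meeting the core of the patched cube lies inside the cube,
   because its support has diameter at most [K + K]. *)
Lemma patch_sft x1 x2 y v : X x2 -> X y ->
  (forall u, in_cube n u -> ~~ in_core n (K + K) u -> x1 u = x2 u) ->
  occurs_at (cube_pattern x1) y v -> X (patch y x2 v).
Proof.
move=> /X_F X2 /X_F Xy agree /occurs_cube_pattern occ; apply/X_F => Q inF [w occ_w].
have [[u0 [u0_Q core_u0]]|no_core] :=
  classic (exists u0, u0 \in psupp Q /\ in_core n (K + K) (psub (padd u0 w) v)).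
- apply: (X2 Q inF); exists (psub w v) => u u_Q.
  have u_C : in_cube n (psub (padd u w) v).
    apply/forallP=> i; move: (forallP core_u0 i) (forallP (F_K inF u_Q) i).
    move: (forallP (F_K inF u0_Q) i); rewrite !(psubE, paddE).
    move: (u0 i) (u i) (w i) (v i) => a b c e; lia.
  rewrite -occ_w // /patch u_C; congr x2.
  by apply/ffunP=> i; rewrite !(psubE, paddE) addrA.
- apply: (Xy Q inF); exists w => u u_Q; rewrite -occ_w // /patch.
  case: ifP => // u_C; rewrite -agree // -?occ ?psubK //.
  by apply/negP=> core_u; apply: no_core; exists u.
Qed.

Lemma cube_pattern_avoidable x1 x2 c0 : X x1 -> X x2 ->
  (forall u, in_cube n u -> ~~ in_core n (K + K) u -> x1 u = x2 u) ->
  in_cube n c0 -> (enum_rank (x1 c0) < enum_rank (x2 c0))%nat ->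
  (forall c, in_cube n c -> ltlex c c0 -> x1 c = x2 c) ->
  forall N, exists2 y, X y & forall v, inbox N v -> ~ occurs_at (cube_pattern x1) y v.
Proof.
move=> X1 X2 agree c0_C lt_c0 min_c0 N.
pose Q y := X y /\ forall u, ~~ inbox (N + n) u -> y u = x1 u.
have [y [[Xy y_out] max_y]] :=
  @exists_ltconf_max _ _ Q x1 (N + n) (conj X1 (fun _ _ => erefl)) (fun y Qy => Qy.2).
exists y => // v v_N occ.
have patch_out u : in_cube n (psub u v) -> inbox (N + n) u.
  move/in_cube_inbox/forallP=> in_n; apply/forallP=> i; move: (in_n i) (forallP v_N i).
  by rewrite psubE; move: (u i) (v i) => a b; lia.
apply: (max_y (patch y x2 v)).
  split; first exact: patch_sft X2 Xy agree occ.
  move=> u u_out; rewrite /patch; case: ifP => [/patch_out|_]; last exact: y_out.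
  by rewrite (negPf u_out).
move/occurs_cube_pattern: occ => occ.
exists (padd c0 v); split=> [|c lt_c]; rewrite /patch ?paddK ?c0_C ?occ //.
case: ifP => // c_C; rewrite -min_c0 // -?occ ?psubK //.
by rewrite -(ltlex_add2r _ _ v) psubK.
Qed.

Lemma cube_agree x1 x2 : X x1 -> X x2 ->
  (forall u, in_cube n u -> ~~ in_core n (K + K) u -> x1 u = x2 u) ->
  forall u, in_cube n u -> x1 u = x2 u.
Proof.
move=> X1 X2 agree u0 u0_C; apply: NNPP => neq_u0.
have [c0 [_ [c0_C neq_c0] min_c0]] :=
  @seq_minimal _ (@ltlex d) (@ltlex_irr d) (@ltlex_trans d)
    (fun c => in_cube n c /\ x1 c <> x2 c) (ball_seq d n)
    (ex_intro2 _ _ u0 (mem_ball_seq (in_cube_inbox u0_C)) (conj u0_C neq_u0)).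
have {}min_c0 c : in_cube n c -> ltlex c c0 -> x1 c = x2 c.
  move=> c_C lt_c; apply: NNPP => neq_c.
  by apply: (min_c0 c) => //; rewrite mem_ball_seq ?in_cube_inbox.
have appears_cube x : appears (cube_pattern x) x.
  by exists (pzero d); apply/occurs_cube_pattern => u _; rewrite padd0.
have : enum_rank (x1 c0) != enum_rank (x2 c0) by apply/eqP => /enum_rank_inj.
rewrite neq_ltn => /orP[lt_c0|lt_c0].
- apply: (minimal_sft_unavoidable X_F minX X1 (appears_cube x1)).
  exact: cube_pattern_avoidable X1 X2 agree c0_C lt_c0 min_c0.
- apply: (minimal_sft_unavoidable X_F minX X2 (appears_cube x2)).
  apply: cube_pattern_avoidable X2 X1 _ c0_C lt_c0 _.
    by move=> u u_C /(agree u u_C).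
  by move=> c c_C /(min_c0 c c_C).
Qed.

Lemma Npat_le_boundary :
  (Npat X n <= expn #|A| #|[set b : box d n | ~~ in_core n (K + K) (box_emb b)]|)%nat.
Proof.
rewrite /Npat; set S := [set p | asb _]; set B := [set b | ~~ _].
pose restrict (p : {ffun box d n -> A}) : {ffun {b | b \in B} -> A} := [ffun b => p (val b)].
suff inj : {in S &, injective restrict}.
  rewrite -(card_in_imset inj); apply: leq_trans (max_card _) _.
  by rewrite card_ffun card_sig.
move=> p1 p2; rewrite !inE => /asbP[x1 [X1 [v1 occ1]]] /asbP[x2 [X2 [v2 occ2]]] eq_B.
have agree_B b : b \in B -> p1 b = p2 b.
  by move=> b_B; move/ffunP: eq_B => /(_ (exist _ b b_B)); rewrite !ffunE.
apply/ffunP=> b; rewrite -occ1 -occ2.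
apply: (@cube_agree (fun u => x1 (padd u v1)) (fun u => x2 (padd u v2))).
- exact: sft_shift X_F _ _ X1.
- exact: sft_shift X_F _ _ X2.
- by move=> u /in_cubeP[b' ->] out; rewrite occ1 occ2 agree_B ?inE.
- exact: in_cube_emb.
Qed.

End Rigidity.

Lemma Npat_minimal_sft_le A d (X : config A d -> Prop) : is_SFT X -> minimal X ->
  exists B, forall n, (Npat X n <= expn (maxn 1 #|A|) (B * expn n d.-1))%nat.
Proof.
case=> F X_F minX; have [K F_K] := sft_support_bound F.
exists (d * (K + K).*2)%nat => n; rewrite -mulnA.
apply: leq_trans (Npat_le_boundary X_F F_K minX n) _.
move: (card_box_not_core d n (K + K)); set e := #|_| => le_e.
case: e le_e => [|e] le_e; first by rewrite expn_gt0 leq_maxl.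
apply: leq_trans (leq_pexp2l (leq_maxl 1 #|A|) le_e).
by rewrite leq_exp2r ?leq_maxr.
Qed.

Section Asymptotics.
Local Open Scope R_scope.

Lemma ln2_gt0 : 0 < ln 2.
Proof. by rewrite -ln_1; apply: ln_increasing; lra. Qed.

(* Stdlib's [ln] is [0] on nonpositive arguments. *)
Lemma log2_nonpos x : x <= 0 -> log2 x = 0.
Proof.
move=> x_le0; rewrite /log2.
have -> : ln x = 0 by unfold ln; destruct (Rlt_dec 0 x); [exfalso; lra|].
by rewrite /Rdiv Rmult_0_l.
Qed.

Lemma log2_le x y : 0 < x -> x <= y -> log2 x <= log2 y.
Proof.
move=> x_gt0 [lt_xy|->]; last exact: Rle_refl.
apply: Rmult_le_compat_r; first exact/Rlt_le/Rinv_0_lt_compat/ln2_gt0.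
exact/Rlt_le/ln_increasing.
Qed.

Lemma log2_gt0 x : 1 < x -> 0 < log2 x.
Proof.
move=> x_gt1; apply: Rdiv_lt_0_compat; last exact: ln2_gt0.
by rewrite -ln_1; apply: ln_increasing; lra.
Qed.

Lemma log2_mult x y : 0 < x -> 0 < y -> log2 (x * y) = log2 x + log2 y.
Proof. by move=> x_gt0 y_gt0; rewrite /log2 ln_mult // /Rdiv Rmult_plus_distr_r. Qed.

Lemma log2_pow x k : 0 < x -> log2 (x ^ k) = INR k * log2 x.
Proof. by move=> x_gt0; rewrite /log2 ln_pow // /Rdiv Rmult_assoc. Qed.

Lemma INR_expn m k : INR (expn m k) = INR m ^ k.
Proof. by elim: k => [|k IH]; rewrite ?expn0 // expnS mult_INR IH. Qed.

Lemma log2_INR_le_pow (m a e : nat) :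
  (1 <= a)%nat -> (m <= expn a e)%nat -> log2 (INR m) <= INR e * log2 (INR a).
Proof.
move=> a_ge1 le_m; have a_gt0 : 0 < INR a by apply: (lt_INR 0); lia.
have log2_a_ge0 : 0 <= log2 (INR a).
  have <- : log2 1 = 0 by rewrite /log2 ln_1 /Rdiv Rmult_0_l.
  by apply: log2_le; [lra | apply: (le_INR 1); lia].
case: m le_m => [|m] le_m.
  rewrite log2_nonpos /=; last exact: Rle_refl.
  exact: Rmult_le_pos (pos_INR e) log2_a_ge0.
rewrite -log2_pow // -INR_expn; apply: log2_le; first by apply: (lt_INR 0); lia.
by apply: le_INR; lia.
Qed.

Lemma limsup_le_add_inv_log2 (u : nat -> R) (L C : R) :
  (forall n, (2 <= n)%nat -> u n <= L + C / log2 (INR n)) -> limsup_le u L.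
Proof.
(* Past [exp M] we have [Rabs C <= eps * log2 n]. *)
move=> le_u eps eps_gt0; pose M := ln 2 * Rabs C / eps.
exists (Z.to_nat (up (exp M)) + 2)%nat => n le_n.
have [up_gt _] := archimed (exp M).
have up_ge0 : (0 <= up (exp M))%Z by apply: le_IZR; have := exp_pos M; lra.
have exp_le_n : exp M <= INR n.
  apply: Rle_trans (Rlt_le _ _ up_gt) _.
  by rewrite -(Znat.Z2Nat.id _ up_ge0) -INR_IZR_INZ; apply: le_INR; lia.
have l_gt0 : 0 < log2 (INR n) by apply: log2_gt0; apply: (lt_INR 1); lia.
have C_le : Rabs C <= eps * log2 (INR n).
  apply: (Rmult_le_reg_r (ln 2)); first exact: ln2_gt0.
  have -> : eps * log2 (INR n) * ln 2 = eps * ln (INR n).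
    by rewrite /log2; field; apply: Rgt_not_eq; exact: ln2_gt0.
  have M_le : M <= ln (INR n).
    rewrite -(ln_exp M); case: exp_le_n => [lt_n|<-]; last exact: Rle_refl.
    by apply/Rlt_le/ln_increasing => //; exact: exp_pos.
  have : M * eps = ln 2 * Rabs C by rewrite /M; field; lra.
  nra.
have inv_l : log2 (INR n) * / log2 (INR n) = 1 by field; lra.
have := le_u n ltac:(lia); have := Rle_abs C; have := Rinv_0_lt_compat _ l_gt0.
rewrite /Rdiv; nra.
Qed.

Lemma limsup_loglog_le (f : nat -> R) (c : R) (k : nat) :
  (forall n, log2 (f n) <= c * INR n ^ k) ->
  limsup_le (fun n => log2 (log2 (f n)) / log2 (INR n)) (INR k).
Proof.
move=> le_f; apply: (@limsup_le_add_inv_log2 _ _ (Rabs (log2 c))) => n le_2n.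
have l_gt0 : 0 < log2 (INR n) by apply: log2_gt0; apply: (lt_INR 1); lia.
have inv_l_gt0 := Rinv_0_lt_compat _ l_gt0.
have C_ge0 := Rabs_pos (log2 c).
have k_ge0 := pos_INR k.
rewrite /Rdiv; have [f_le0|f_gt0] := Rle_or_lt (log2 (f n)) 0.
  by rewrite log2_nonpos // Rmult_0_l; nra.
have nk_gt0 : 0 < INR n ^ k by apply: pow_lt; apply: (lt_INR 0); lia.
have c_gt0 : 0 < c by have := le_f n; nra.
have le_loglog : log2 (log2 (f n)) <= log2 c + INR k * log2 (INR n).
  apply: Rle_trans (log2_le f_gt0 (le_f n)) _.
  by rewrite log2_mult // log2_pow; [apply: Rle_refl | apply: (lt_INR 0); lia].
have inv_l : log2 (INR n) * / log2 (INR n) = 1 by field; lra.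
have := Rle_abs (log2 c); nra.
Qed.

End Asymptotics.

Theorem mainTheorem3 (A : finType) (d : nat) (X : config A d -> Prop) :
  (1 <= d)%N -> is_SFT X -> minimal X ->
  upper_entropy_dim_le X (INR d - 1)%R.
Proof.
move=> d_ge1 sft_X minX; have [B le_Npat] := Npat_minimal_sft_le sft_X minX.
have -> : (INR d - 1)%R = INR d.-1 by rewrite -{1}(prednK d_ge1) S_INR; lra.
apply: (@limsup_loglog_le _ (INR B * log2 (INR (maxn 1 #|A|)))) => n.
have -> : (INR B * log2 (INR (maxn 1 #|A|)) * INR n ^ d.-1 =
          INR (B * expn n d.-1) * log2 (INR (maxn 1 #|A|)))%R.
  by rewrite mult_INR INR_expn; ring.
by apply: log2_INR_le_pow; [exact: leq_maxl | exact: le_Npat].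
Qed.
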